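(* Let $N,S,k$ be positive integers and let $e_n(s)$ ($1\le n\le N$, $1\le s\le S$) be chosen independently and uniformly from $\{-1,+1\}$; put $G_{N,S}(s)=(e_1(s),\dots,e_N(s))$. For every $\theta\ge0$, \[ \mathbb{P}\left[\left|\Phi_k(G_{N,S})-\mathbb{E}[\Phi_k(G_{N,S})]\right|\ge\theta\right]\le 2\exp\left\{-\frac{\theta^2}{2k^2N}\right\}. \]
   Context: For a map $G_{N,S}:\{1,\dots,S\}\to\{-1,+1\}^N$, $G_{N,S}(s)=(e_1(s),\dots,e_N(s))$, the cross-correlation measure of order $k$ is \[ \Phi_k(G_{N,S})=\max\left|\sum_{n=1}^M e_{n+d_1}(s_1)\cdots e_{n+d_k}(s_k)\right|, \] the maximum taken over all integers $M,d_1,\dots,d_k$ and $1\le s_1,\dots,s_k\le S$ with $0\le d_1\le\dots\le d_k<M+d_k\le N$ and $d_i\ne d_j$ whenever $s_i=s_j$. *)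

From HB Require Import structures.
From mathcomp Require Import all_boot all_order all_algebra.
From mathcomp Require Import reals sequences exp.
Set Implicit Arguments. Unset Strict Implicit. Unset Printing Implicit Defensive.
Import Order.TTheory GRing.Theory Num.Theory.
Local Open Scope ring_scope.

(* A sample point: e (s, n) for s : 'I_S, n : 'I_N; true <-> +1, false <-> -1.
   (0-based indices: e (s, n) stands for e_{n+1}(s+1).) *)
Definition config (N S : nat) := {ffun 'I_S * 'I_N -> bool}.

Definition sgn (b : bool) : int := if b then 1 else -1.

(* value of e_{m+1}(s+1) for a natural index m (0 outside the range,
   never used for admissible parameters) *)
Definition ev (N S : nat) (e : config N S) (s : 'I_S) (m : nat) : int :=
  match @insub nat (fun x => x < N)%N 'I_N m with
  | Some i => sgn (e (s, i))
  | None => 0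
  end.

Definition admissible (N S k : nat) (M : 'I_N.+1) (d : {ffun 'I_k -> 'I_N})
  (s : {ffun 'I_k -> 'I_S}) : bool :=
  [&& (0 < M)%N,
      [forall i : 'I_k, forall j : 'I_k, (i <= j)%N ==> (d i <= d j)%N],
      [forall i : 'I_k, (d i + M <= N)%N] &
      [forall i : 'I_k, forall j : 'I_k, (i != j) && (s i == s j) ==> (d i != d j)]].

Definition corr (N S k : nat) (e : config N S) (M : 'I_N.+1)
  (d : {ffun 'I_k -> 'I_N}) (s : {ffun 'I_k -> 'I_S}) : int :=
  \sum_(n < M) \prod_(i < k) ev e (s i) (n + d i).

(* cross-correlation measure of order k (max over empty set := 0) *)
Definition Phi (N S k : nat) (e : config N S) : nat :=
  \max_(p : 'I_N.+1 * {ffun 'I_k -> 'I_N} * {ffun 'I_k -> 'I_S}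
          | admissible p.1.1 p.1.2 p.2)
     `|corr e p.1.1 p.1.2 p.2|%N.

Definition Prob (R : realType) (N S : nat) (A : config N S -> bool) : R :=
  #|[set e : config N S | A e]|%:R / #|{: config N S}|%:R.

Definition Expect (R : realType) (N S : nat) (X : config N S -> R) : R :=
  (\sum_(e : config N S) X e) / #|{: config N S}|%:R.

From HB Require Import structures.
From mathcomp Require Import all_boot all_order all_algebra.
From mathcomp Require Import reals sequences exp.
From mathcomp Require Import boolp functions topology normedtype derive realfun.
From mathcomp Require Import ring lra zify.
Import Order.TTheory GRing.Theory Num.Theory.
Import numFieldNormedType.Exports.
Local Open Scope ring_scope.

(* Changing the signs e_n(s), 1 <= s <= S, at a single time n changes every
   correlation sum by at most 2k: for each of the k factors only one summand
   reads time n, and a product of signs moves by at most the sum of the moves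
   of its factors.  Hence Phi_k has bounded differences 2k with respect to
   the N independent columns of the sign matrix, and McDiarmid's inequality
   gives the tail bound 2 exp(-2 theta^2 / (N (2k)^2)).  McDiarmid's inequality
   is proved in the classical way: the Doob martingale of conditional averages
   over the first j columns has increments of oscillation at most 2k, so by
   Hoeffding's lemma each increment contributes a factor exp(l^2 (2k)^2 / 8)
   to the exponential moment, and Chernoff's bound concludes. *)

Lemma is_derive_ge0_le (R : realType) (f df : R -> R) (a b : R) :
  (forall x, is_derive x (1 : R) f (df x)) -> (forall x, a < x < b -> 0 <= df x) ->
  a <= b -> f a <= f b.
Proof.
move=> f_df df_ge0; rewrite le_eqVlt => /predU1P[-> // | ab].
have [|c c_ab df_c] := MVT ab (fun x _ => f_df x).
  apply/continuous_subspaceT => x.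
  exact/differentiable_continuous/derivable1_diffP/(@ex_derive _ _ _ _ _ _ _ (f_df x)).
by rewrite -subr_ge0 df_c mulr_ge0 ?subr_ge0 ?(ltW ab) ?df_ge0.
Qed.

Section HoeffdingTwoPoint.
Variables (R : realType) (p : R).
Hypotheses (p_ge0 : 0 <= p) (p_le1 : p <= 1).

(* [u] is the moment generating function of Bernoulli(p), and the lemma
   amounts to [0 <= psi]: [psi 0 = dpsi 0 = 0] and [psi] is convex. *)
Let u (x : R) := 1 - p + p * expR x.
Let psi (x : R) := x ^+ 2 / 8 + p * x - ln (u x).
Let dpsi (x : R) := x / 4 + (p - 1) + (1 - p) / u x.
Let ddpsi (x : R) := 1 / 4 - (1 - p) * (p * expR x) / u x ^+ 2.

Let u_gt0 x : 0 < u x.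
Proof.
rewrite /u; case: (ltgtP p 1) p_le1 => // [p_lt1 _ | -> _].
  by rewrite ltr_wpDr ?mulr_ge0 ?expR_ge0 // subr_gt0.
by rewrite subrr add0r mul1r expR_gt0.
Qed.

Let u0 : u 0 = 1.
Proof. by rewrite /u expR0 mulr1 subrK. Qed.

Let is_derive_u x : is_derive x (1 : R) u (p * expR x).
Proof.
have D : is_derive x (1 : R) (cst (1 - p) + p \*: @expR R) (0 + p *: expR x).
  exact: is_deriveD.
by rewrite add0r in D.
Qed.

Let is_derive_dpsi x : is_derive x (1 : R) dpsi (ddpsi x).
Proof.
have uV : is_derive x (1 : R) (fun y => (u y)^-1) (- (u x) ^- 2 *: (p * expR x)).
  have ux_neq0 : u x != 0 by rewrite gt_eqF.
  exact: is_deriveV.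
have D : is_derive x (1 : R) ((4^-1) \*: id + cst (p - 1) + (1 - p) \*: (fun y => (u y)^-1))
    (4^-1 *: 1 + 0 + (1 - p) *: (- (u x) ^- 2 *: (p * expR x))).
  by apply: is_deriveD; apply: is_deriveD.
have -> : dpsi = (4^-1) \*: id + cst (p - 1) + (1 - p) \*: (fun y => (u y)^-1).
  by apply/funext => y; rewrite /dpsi /= mulrC.
apply: (is_derive_eq D).
change (4^-1 * 1 + 0 + (1 - p) * (- (u x ^+ 2)^-1 * (p * expR x)) = ddpsi x).
by rewrite /ddpsi; field; rewrite gt_eqF.
Qed.

Let is_derive_psi x : is_derive x (1 : R) psi (dpsi x).
Proof.
have ln_u : is_derive (u x) (1 : R) (@ln R) (u x)^-1 by exact: is_derive1_ln.
have lnu : is_derive x (1 : R) (@ln R \o u) ((u x)^-1 * (p * expR x)).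
  exact: is_derive1_comp.
have D : is_derive x (1 : R) ((8^-1) \*: (id ^+ 2) + p \*: id - (@ln R \o u))
    (8^-1 *: ((2%:R * x ^+ 1) *: 1) + p *: 1 - (u x)^-1 * (p * expR x)).
  by apply: is_deriveB; apply: is_deriveD.
have -> : psi = (8^-1) \*: (id ^+ 2) + p \*: id - (@ln R \o u).
  by apply/funext => y; rewrite /psi /= mulrC.
apply: (is_derive_eq D).
change (8^-1 * ((2 * x ^+ 1) * 1) + p * 1 - (u x)^-1 * (p * expR x) = dpsi x).
have ux_neq0 : u x != 0 by rewrite gt_eqF.
by move: ux_neq0; rewrite /dpsi /u => ?; field.
Qed.

(* AM-GM: 4 (1 - p) p e^x <= ((1 - p) + p e^x)^2. *)
Let ddpsi_ge0 x : 0 <= ddpsi x.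
Proof.
have ux := u_gt0 x; have ex := expR_ge0 x.
have -> : ddpsi x = (u x ^+ 2 - 4 * ((1 - p) * (p * expR x))) / (4 * u x ^+ 2).
  by rewrite /ddpsi; field; rewrite gt_eqF.
apply: divr_ge0; last by rewrite mulr_ge0 // exprn_ge0 // ltW.
have := sqr_ge0 (1 - p - p * expR x); rewrite /u; nra.
Qed.

Let dpsi0 : dpsi 0 = 0.
Proof. by rewrite /dpsi u0 divr1; ring. Qed.

Let psi_ge0 x : 0 <= psi x.
Proof.
have psi0 : psi 0 = 0 by rewrite /psi u0 ln1; ring.
have dpsi_mono a b : a <= b -> dpsi a <= dpsi b.
  by apply: is_derive_ge0_le => // y _; exact: ddpsi_ge0.
rewrite -psi0; case: (lerP 0 x) => [x_ge0 | x_lt0].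
  apply: is_derive_ge0_le x_ge0 => // y /andP[y_gt0 _].
  by rewrite -dpsi0 dpsi_mono // ltW.
rewrite -lerN2; apply: (@is_derive_ge0_le _ (fun y => - psi y) (fun y => - dpsi y)).
- by move=> y; exact: is_deriveN.
- by move=> y /andP[_ y_lt0]; rewrite oppr_ge0 -dpsi0 dpsi_mono // ltW.
- exact: ltW.
Qed.

Lemma hoeffding_two_point h :
  (1 - p) * expR (- (p * h)) + p * expR ((1 - p) * h) <= expR (h ^+ 2 / 8).
Proof.
have ln_u : ln (u h) <= h ^+ 2 / 8 + p * h by rewrite -subr_ge0 psi_ge0.
have -> : (1 - p) * expR (- (p * h)) + p * expR ((1 - p) * h) = expR (- (p * h)) * u h.
  by rewrite /u mulrDr mulrCA -expRD; congr (_ + _ * expR _); [ring | ring].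
have -> : expR (h ^+ 2 / 8) = expR (- (p * h)) * expR (h ^+ 2 / 8 + p * h).
  by rewrite -expRD; congr expR; ring.
by rewrite ler_pM2l ?expR_gt0 // -(lnK (u_gt0 h)) ler_expR.
Qed.

End HoeffdingTwoPoint.

Section HoeffdingLemma.
Variable R : realType.

Lemma expR_le_chord (l a b x : R) : a <= x -> x <= b ->
  expR (l * x) * (b - a) <= (b - x) * expR (l * a) + (x - a) * expR (l * b).
Proof.
move=> ax xb.
have tangent y : expR (l * x) * (1 + l * (y - x)) <= expR (l * y).
  have -> : l * y = l * x + l * (y - x) by ring.
  by rewrite expRD ler_pM2l ?expR_gt0 // expR_ge1Dx.
have -> : expR (l * x) * (b - a) = (b - x) * (expR (l * x) * (1 + l * (a - x))) +
    (x - a) * (expR (l * x) * (1 + l * (b - x))) by ring.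
by apply: lerD; apply: ler_wpM2l; rewrite ?subr_ge0 ?tangent.
Qed.

Lemma sum_expR_le_chord (T : finType) (X : T -> R) (l a b : R) :
  (forall t, a <= X t <= b) -> \sum_t X t = 0 ->
  (\sum_t expR (l * X t)) * (b - a) <=
    #|T|%:R * (b * expR (l * a) - a * expR (l * b)).
Proof.
move=> X_ab X_sum0; rewrite mulr_suml.
apply: (@le_trans _ _ (\sum_t ((b - X t) * expR (l * a) + (X t - a) * expR (l * b)))).
  by apply: ler_sum => t _; have /andP[aX Xb] := X_ab t; exact: expR_le_chord aX Xb.
rewrite big_split /= -!mulr_suml !sumrB X_sum0 !sumr_const.
rewrite -[b *+ _]mulr_natl -[a *+ _]mulr_natl; lra.
Qed.

Lemma hoeffding_lemma (T : finType) (X : T -> R) (c l : R) : 0 < c ->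
  (forall t t', X t - X t' <= c) -> \sum_t X t = 0 ->
  \sum_t expR (l * X t) <= #|T|%:R * expR (l ^+ 2 * c ^+ 2 / 8).
Proof.
move=> c_gt0 X_osc X_sum0.
have [t0 _ | T0] := pickP (xpredT : pred T); last by rewrite big_pred0 // mulr_ge0 ?expR_ge0.
have [tm _ X_min] := @arg_minP _ R _ t0 xpredT X erefl.
set a := X tm.
have X_range t : a <= X t <= a + c by rewrite X_min //= -lerBlDl X_osc.
have T_gt0 : 0 < #|T|%:R :> R by rewrite ltr0n; apply/card_gt0P; exists t0.
have a_le0 : a <= 0.
  have : \sum_(t : T) a <= \sum_t X t by apply: ler_sum => t _; rewrite X_min.
  by rewrite X_sum0 sumr_const -[a *+ _]mulr_natr pmulr_lle0.
have ac_ge0 : 0 <= a + c.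
  have : \sum_t X t <= \sum_(t : T) (a + c).
    by apply: ler_sum => t _; have /andP[] := X_range t.
  by rewrite X_sum0 sumr_const -[_ *+ _]mulr_natr pmulr_lge0.
(* By convexity of exp the extremal law puts all its mass on a and a + c,
   the latter with weight q. *)
set q := - a / c.
have q_ge0 : 0 <= q by rewrite divr_ge0 ?oppr_ge0 ?(ltW c_gt0).
have q_le1 : q <= 1 by rewrite ler_pdivrMr // mul1r -subr_ge0 opprK addrC.
have two_point := @hoeffding_two_point R q q_ge0 q_le1 (l * c).
have chord := @sum_expR_le_chord _ X l _ _ X_range X_sum0.
have c_neq0 : c != 0 by rewrite gt_eqF.
have chord_eq : (a + c) * expR (l * a) - a * expR (l * (a + c)) =
    c * ((1 - q) * expR (- (q * (l * c))) + q * expR ((1 - q) * (l * c))).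
  have -> : - (q * (l * c)) = l * a by rewrite /q; field.
  have -> : (1 - q) * (l * c) = l * (a + c) by rewrite /q; field.
  by rewrite /q; field.
rewrite chord_eq addrC addKr in chord.
rewrite exprMn in two_point.
rewrite -(ler_pM2r c_gt0); apply: le_trans chord _.
by rewrite -[X in _ <= X]mulrA ler_pM2l // [X in _ <= X]mulrC ler_pM2l.
Qed.

End HoeffdingLemma.

Section Average.
Context {R : numFieldType} {T : finType}.

Definition avg (X : T -> R) : R := (\sum_t X t) / #|T|%:R.

Lemma avg_cst (a : R) : (0 < #|T|)%N -> avg (fun=> a) = a.
Proof.
by move=> T_gt0; rewrite /avg sumr_const -[a *+ _]mulr_natr mulfK // pnatr_eq0 -lt0n.
Qed.

Lemma avgN (X : T -> R) : avg (fun t => - X t) = - avg X.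
Proof. by rewrite /avg sumrN mulNr. Qed.

Lemma avgB (X Y : T -> R) : avg (fun t => X t - Y t) = avg X - avg Y.
Proof. by rewrite /avg sumrB mulrBl. Qed.

Lemma avg_le (X : T -> R) (a : R) : (0 < #|T|)%N -> (forall t, X t <= a) -> avg X <= a.
Proof.
move=> T_gt0 X_le; rewrite /avg ler_pdivrMr ?ltr0n // mulr_natr -sumr_const.
by apply: ler_sum => t _; exact: X_le.
Qed.

End Average.

Lemma chernoff_count {R : realType} {T : finType} (g : T -> R) (th l : R) : 0 <= l ->
  #|[set t | th <= g t]|%:R * expR (l * th) <= \sum_t expR (l * g t).
Proof.
move=> l_ge0; rewrite mulr_natl -sumr_const big_mkcond /=.
apply: ler_sum => t _; rewrite inE; case: ifP => [th_le | _]; last exact: expR_ge0.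
by rewrite ler_expR ler_wpM2l.
Qed.

Section McDiarmid.
Context {R : realType} {I V : finType} {N : nat}.
Local Notation Om := {ffun I * 'I_N -> V}.
Hypothesis Om_gt0 : (0 < #|Om|)%N.

Definition bounded_differences (f : Om -> R) (c : R) :=
  forall (n : nat) (e e' : Om),
    (forall x : I * 'I_N, (x.2 : nat) != n -> e x = e' x) -> f e - f e' <= c.

(* [splice j e r] keeps the columns of [e] before [j] and those of [r] after,
   so [cond_avg j f e] is the conditional expectation of [f] given the first
   [j] columns of [e]: the Doob martingale of [f]. *)
Definition splice (j : nat) (e r : Om) : Om :=
  [ffun x : I * 'I_N => if (x.2 < j)%N then e x else r x].

Definition cond_avg (j : nat) (f : Om -> R) (e : Om) : R := avg (fun r => f (splice j e r)).

Lemma splice_swap j e r : splice j (splice j e r) (splice j r e) = e.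
Proof. by apply/ffunP => x; rewrite !ffunE; case: (x.2 < j)%N. Qed.

Lemma splice_idl j e r t : splice j (splice j e r) t = splice j e t.
Proof. by apply/ffunP => x; rewrite !ffunE; case: (x.2 < j)%N. Qed.

Lemma spliceS j e r t : splice j.+1 (splice j e r) t = splice j e (splice j.+1 r t).
Proof.
apply/ffunP => x; rewrite !ffunE.
case: ifP => [x_lt_Sj | x_ge_Sj]; case: ifP => // x_lt_j.
by rewrite ltnS ltnW in x_ge_Sj.
Qed.

Lemma splice0 e r : splice 0 e r = r.
Proof. by apply/ffunP => x; rewrite ffunE. Qed.

Lemma spliceN e r : splice N e r = e.
Proof. by apply/ffunP => x; rewrite ffunE ltn_ord. Qed.

Lemma sum_splice j (F : Om -> R) :
  \sum_e \sum_r F (splice j e r) = #|Om|%:R * \sum_e F e.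
Proof.
pose swap (p : Om * Om) := (splice j p.1 p.2, splice j p.2 p.1).
have swapK : involutive swap by case=> e r; rewrite /swap /= !splice_swap.
rewrite pair_big /= (reindex_inj (inv_inj swapK)) /=.
rewrite (eq_bigr (fun p : Om * Om => F p.1)); last by case=> e r _; rewrite splice_swap.
rewrite -(pair_big xpredT xpredT (fun e _ => F e)) /= mulr_sumr.
by apply: eq_bigr => e _; rewrite sumr_const mulr_natl.
Qed.

Lemma cond_avg0 f e : cond_avg 0 f e = avg f.
Proof. by rewrite /cond_avg; congr avg; apply/funext => r; rewrite splice0. Qed.

Lemma cond_avgN f e : cond_avg N f e = f e.
Proof.
rewrite /cond_avg (_ : (fun r => f (splice N e r)) = fun=> f e) ?avg_cst //.
by apply/funext => r; rewrite spliceN.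
Qed.

Lemma cond_avg_splice j f e r : cond_avg j f (splice j e r) = cond_avg j f e.
Proof. by rewrite /cond_avg; congr avg; apply/funext => t; rewrite splice_idl. Qed.

Lemma sum_cond_avg_succ j f e :
  \sum_r cond_avg j.+1 f (splice j e r) = #|Om|%:R * cond_avg j f e.
Proof.
rewrite /cond_avg /avg -mulr_suml.
under eq_bigr => r _ do under eq_bigr => t _ do rewrite spliceS.
by rewrite (sum_splice j.+1 (fun u => f (splice j e u))) mulrA.
Qed.

Lemma cond_avg_succ_le f c j e r r' : bounded_differences f c ->
  cond_avg j.+1 f (splice j e r) - cond_avg j.+1 f (splice j e r') <= c.
Proof.
move=> f_bd; rewrite /cond_avg -avgB; apply: avg_le => // t.
apply: (f_bd j) => x x_neq_j; rewrite !ffunE; case: ifP => // x_lt_Sj.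
by rewrite ltnS leq_eqVlt (negPf x_neq_j) /= in x_lt_Sj; rewrite x_lt_Sj.
Qed.

Lemma sum_expR_increment f c l j e : 0 < c -> bounded_differences f c ->
  \sum_r expR (l * (cond_avg j.+1 f (splice j e r) - cond_avg j f e))
    <= #|Om|%:R * expR (l ^+ 2 * c ^+ 2 / 8).
Proof.
move=> c_gt0 f_bd; apply: hoeffding_lemma => // [r r' | ].
  by rewrite opprB addrA subrK; exact: cond_avg_succ_le.
by rewrite sumrB sum_cond_avg_succ sumr_const mulr_natl subrr.
Qed.

Lemma sum_expR_cond_avg_succ f c l j : 0 < c -> bounded_differences f c ->
  \sum_e expR (l * (cond_avg j.+1 f e - avg f))
    <= expR (l ^+ 2 * c ^+ 2 / 8) * \sum_e expR (l * (cond_avg j f e - avg f)).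
Proof.
move=> c_gt0 f_bd.
pose A e := expR (l * (cond_avg j f e - avg f)).
pose B e := expR (l * (cond_avg j.+1 f e - cond_avg j f e)).
have n0_neq0 : #|Om|%:R != 0 :> R by rewrite pnatr_eq0 -lt0n.
have -> : \sum_e expR (l * (cond_avg j.+1 f e - avg f)) =
    (\sum_e A e * \sum_r B (splice j e r)) / #|Om|%:R.
  rewrite -[LHS](mulKf n0_neq0) -(sum_splice j) mulrC; congr (_ / _).
  apply: eq_bigr => e _; rewrite mulr_sumr; apply: eq_bigr => r _.
  by rewrite /A /B !cond_avg_splice -expRD; congr expR; ring.
rewrite ler_pdivrMr ?ltr0n // mulrAC mulr_sumr ler_sum // => e _.
rewrite -/(A e) mulrC (ler_pM2r (expR_gt0 _)) mulrC.
under eq_bigr => r _ do rewrite /B cond_avg_splice.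
exact: sum_expR_increment.
Qed.

Lemma sum_expR_cond_avg f c l j : 0 < c -> bounded_differences f c ->
  \sum_e expR (l * (cond_avg j f e - avg f))
    <= #|Om|%:R * expR (j%:R * (l ^+ 2 * c ^+ 2 / 8)).
Proof.
move=> c_gt0 f_bd; elim: j => [|j IH].
  under eq_bigr => e _ do rewrite cond_avg0 subrr mulr0.
  by rewrite sumr_const mul0r expR0 mulr_natl.
apply: le_trans (sum_expR_cond_avg_succ f c l j c_gt0 f_bd) _.
apply: le_trans (ler_wpM2l (expR_ge0 _) IH) _.
by rewrite mulrCA -expRD -[j.+1]addn1 natrD mulrDl mul1r addrC.
Qed.

Lemma bounded_differencesN f c :
  bounded_differences f c -> bounded_differences (fun e => - f e) c.
Proof.
move=> f_bd n e e' e_e'; rewrite opprK addrC.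
by apply: (f_bd n) => x x_neq_n; rewrite e_e'.
Qed.

Lemma mcdiarmid_upper f c th : (0 < N)%N -> 0 < c -> 0 <= th -> bounded_differences f c ->
  #|[set e : Om | th <= f e - avg f]|%:R
    <= #|Om|%:R * expR (- (2 * th ^+ 2 / (N%:R * c ^+ 2))).
Proof.
move=> N_gt0 c_gt0 th_ge0 f_bd.
have N_gt0' : 0 < N%:R :> R by rewrite ltr0n.
(* the minimiser of [N%:R * (l ^+ 2 * c ^+ 2 / 8) - l * th] *)
set l := 4 * th / (N%:R * c ^+ 2).
have l_ge0 : 0 <= l by rewrite /l divr_ge0 ?mulr_ge0 ?sqr_ge0 ?(ltW N_gt0') //; lra.
have mgf : \sum_e expR (l * (f e - avg f))
    <= #|Om|%:R * expR (N%:R * (l ^+ 2 * c ^+ 2 / 8)).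
  under eq_bigr => e _ do rewrite -[f e](cond_avgN f e).
  exact: sum_expR_cond_avg.
have := le_trans (chernoff_count (fun e => f e - avg f) th l l_ge0) mgf.
have -> : - (2 * th ^+ 2 / (N%:R * c ^+ 2)) = N%:R * (l ^+ 2 * c ^+ 2 / 8) - l * th.
  by rewrite /l; field; rewrite !gt_eqF.
by move=> bound; rewrite expRD expRN mulrA ler_pdivlMr ?expR_gt0.
Qed.

Lemma mcdiarmid f c th : (0 < N)%N -> 0 < c -> 0 <= th -> bounded_differences f c ->
  #|[set e : Om | th <= `|f e - avg f|]|%:R / #|Om|%:R
    <= 2 * expR (- (2 * th ^+ 2 / (N%:R * c ^+ 2))).
Proof.
move=> N_gt0 c_gt0 th_ge0 f_bd.
have upper := mcdiarmid_upper f c th N_gt0 c_gt0 th_ge0 f_bd.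
have lower := mcdiarmid_upper (fun e => - f e) c th N_gt0 c_gt0 th_ge0
  (bounded_differencesN f c f_bd).
rewrite avgN in lower.
set E := expR _ in upper lower *.
rewrite ler_pdivrMr ?ltr0n // (_ : 2 * E * _ = #|Om|%:R * E + #|Om|%:R * E); last by ring.
apply: le_trans (lerD upper lower); rewrite -natrD ler_nat.
apply: leq_trans (leq_card_setU _ _).1; apply: subset_leq_card.
apply/fintype.subsetP => e; rewrite !inE ler_normr => /orP[-> // | th_le].
by apply/orP; right; rewrite opprK addrC -opprB.
Qed.

End McDiarmid.

Section SumProdBounds.
Context {R : numDomainType}.

Lemma norm_prod_le1 K (a : 'I_K -> R) : (forall i, `|a i| <= 1) -> `|\prod_i a i| <= 1.
Proof. by move=> a_le1; rewrite normr_prod prodr_ile1 // => i _; rewrite normr_ge0 a_le1. Qed.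

Lemma norm_prod_sub_le K (a b : 'I_K -> R) :
  (forall i, `|a i| <= 1) -> (forall i, `|b i| <= 1) ->
  `|\prod_i a i - \prod_i b i| <= \sum_i `|a i - b i|.
Proof.
elim: K a b => [|K IH] a b a_le1 b_le1; first by rewrite !big_ord0 subrr normr0.
rewrite !big_ord_recr /=.
set Pa := \prod_(i < K) _; set Pb := \prod_(i < K) _.
have Pa_le1 : `|Pa| <= 1 by apply: norm_prod_le1 => i; exact: a_le1.
have IH' : `|Pa - Pb| <=
    \sum_(i < K) `|a (widen_ord (leqnSn K) i) - b (widen_ord (leqnSn K) i)|.
  by apply: IH => i; [exact: a_le1 | exact: b_le1].
have -> : Pa * a ord_max - Pb * b ord_max =
    Pa * (a ord_max - b ord_max) + (Pa - Pb) * b ord_max by ring.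
apply: le_trans (ler_normD _ _) _; rewrite !normrM addrC lerD //.
  by rewrite ler_piMl ?normr_ge0.
by apply: le_trans _ IH'; rewrite ler_piMr ?normr_ge0 ?b_le1.
Qed.

Lemma sum_shift_le_single (g : nat -> R) n d M :
  (forall m, 0 <= g m) -> (forall m, m != n -> g m = 0) ->
  \sum_(i < M) g (i + d)%N <= g n.
Proof.
move=> g_ge0 g_single; elim: M d => [|M IH] d; first by rewrite big_ord0 g_ge0.
rewrite big_ord_recl add0n; under eq_bigr => i _ do rewrite lift0 addSnnS.
have [-> | d_neq_n] := eqVneq d n; last by rewrite g_single // add0r IH.
by rewrite big1 ?addr0 // => i _; apply: g_single; lia.
Qed.

End SumProdBounds.

Section PhiBoundedDifferences.
Variables N S k : nat.
Local Notation Om := (config N S).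

Lemma norm_ev_le1 (e : Om) s m : `|ev e s m| <= 1.
Proof. by rewrite /ev; case: insubP => [i _ _ | _] //; case: (e (s, i)). Qed.

Lemma ev_eq (e e' : Om) n s m :
  (forall x : 'I_S * 'I_N, (x.2 : nat) != n -> e x = e' x) -> m != n ->
  ev e s m = ev e' s m.
Proof.
move=> e_e' m_neq_n; rewrite /ev; case: insubP => [i _ i_m | _] //.
by rewrite e_e' //= i_m.
Qed.

Lemma norm_corr_sub_le (e e' : Om) (n : nat) (M : 'I_N.+1)
  (d : {ffun 'I_k -> 'I_N}) (s : {ffun 'I_k -> 'I_S}) :
  (forall x : 'I_S * 'I_N, (x.2 : nat) != n -> e x = e' x) ->
  `|corr e M d s - corr e' M d s| <= (2 * k)%:R.
Proof.
move=> e_e'; rewrite /corr -sumrB; apply: le_trans (ler_norm_sum _ _ _) _.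
apply: le_trans (_ : \sum_(i < M) \sum_(j < k)
    `|ev e (s j) (i + d j) - ev e' (s j) (i + d j)| <= _).
  by apply: ler_sum => i _; apply: norm_prod_sub_le => j; exact: norm_ev_le1.
rewrite exchange_big /=.
apply: (@le_trans _ _ (\sum_(j < k) 2%:R)); last by rewrite sumr_const card_ord natrM mulr_natr.
apply: ler_sum => j _.
have single m : m != n -> `|ev e (s j) m - ev e' (s j) m| = 0.
  by move=> m_neq_n; rewrite (@ev_eq e e' n) // subrr normr0.
move: (sum_shift_le_single _ n (d j) M (fun m => normr_ge0 _) single) => /le_trans; apply.
by apply: le_trans (ler_normB _ _) _; rewrite lerD ?norm_ev_le1.
Qed.

Lemma Phi_le (e e' : Om) (n : nat) :
  (forall x : 'I_S * 'I_N, (x.2 : nat) != n -> e x = e' x) ->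
  (Phi k e <= Phi k e' + 2 * k)%N.
Proof.
move=> e_e'; apply/bigmax_leqP => p p_adm.
apply: leq_trans (_ : _ <= `|corr e' p.1.1 p.1.2 p.2| + 2 * k)%N _.
  rewrite -lez_nat PoszD !abszE addrC -lerBlDr -natz.
  by apply: le_trans (lerB_dist _ _) _; apply: norm_corr_sub_le; exact: e_e'.
by rewrite leq_add2r (leq_bigmax_cond p p_adm).
Qed.

End PhiBoundedDifferences.

Theorem lemma2 (R : realType) (N S k : nat) (hN : (0 < N)%N) (hS : (0 < S)%N)
  (hk : (0 < k)%N) (theta : R) (htheta : 0 <= theta) :
  Prob R (fun e : config N S =>
          theta <= `|(@Phi N S k e)%:R - @Expect R N S (fun e' => (@Phi N S k e')%:R : R)|)
  <= 2 * expR (- (theta ^+ 2 / (2 * k%:R ^+ 2 * N%:R))).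
Proof.
pose f (e : config N S) : R := (Phi k e)%:R.
have f_bd : bounded_differences f (2 * k)%:R.
  move=> n e e' e_e'; rewrite /f lerBlDr -natrD ler_nat addnC.
  exact: Phi_le e_e'.
have Om_gt0 : (0 < #|config N S|)%N by apply/card_gt0P; exists [ffun=> true].
have c_gt0 : 0 < (2 * k)%:R :> R by rewrite ltr0n muln_gt0.
(* [Prob] and [Expect] unfold to the left-hand side of [mcdiarmid]. *)
have := mcdiarmid Om_gt0 f (2 * k)%:R theta hN c_gt0 htheta f_bd.
have -> : 2 * theta ^+ 2 / (N%:R * (2 * k)%:R ^+ 2) = theta ^+ 2 / (2 * k%:R ^+ 2 * N%:R).
  by rewrite natrM; field; rewrite !pnatr_eq0 -!lt0n hN hk.
by [].
Qed.
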